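(* Let $S=\langle P,\varphi\rangle$ be a SUT model, $t$ a strength, $N\ge1$ an integer and $lb$ an integer with $0\le lb<CAN(t,S)$. If $N\ge CAN(t,S)$, then the optimal cost of the Partial MaxSAT instance $PMSat_{CCX}^{N,t,S,lb}$ (defined in the context) is $CAN(t,S)-(lb+1)$; otherwise it is $\infty$.
   Context: A SUT model is $S=\langle P,\varphi\rangle$, where $P$ is a finite set of parameters, each $p\in P$ having a finite nonempty domain $d(p)$, and $\varphi$ is a propositional formula whose atoms have the form $(p=v)$ with $p\in P$, $v\in d(p)$. A test case is a full assignment $A$ giving each $p$ a value in $d(p)$ such that $\varphi$ is true when each atom $(p=v)$ is read as true iff $A(p)=v$; it is assumed that at least one test case exists. Fix a strength $t$ with $1\le t\le|P|$. A $t$-tuple is an assignment of values to exactly $t$ distinct parameters, viewed as a set of pairs $(p,v)$; a test case covers $\tau$ if it assigns $v$ to $p$ for every $(p,v)\in\tau$. A $t$-tuple is allowed if some test case covers it; $\mathcal T_a$ is the set of allowed $t$-tuples. A covering array $CA(N;t,S)$ is a list of $N$ test cases (repetitions allowed) covering every allowed $t$-tuple; $CAN(t,S)$ is the minimum $N$ for which a $CA(N;t,S)$ exists. $[N]=\{1,\dots,N\}$. A (weighted) Partial MaxSAT instance consists of hard constraints and soft clauses $(c,w)$ with positive integer weight $w$; its optimal cost is the minimum, over truth assignments satisfying all hard constraints, of the total weight of falsified soft clauses, and $\infty$ if the hard constraints are unsatisfiable. Variables: $x_{i,p,v}$ ($i\in[N]$, $p\in P$, $v\in d(p)$), $c^i_\tau$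 ($i\in\{0,\dots,N\}$, $\tau\in\mathcal T_a$), $u_i$ ($i\in\{lb+2,\dots,N\}$). Hard constraints of $PMSat_{CCX}^{N,t,S,lb}$: (X) for every $i\in[N]$, $p\in P$: exactly one of $\{x_{i,p,v}:v\in d(p)\}$ is true; (SUTX) for every $i\in[N]$: the formula obtained from $\varphi$ by replacing each atom $(p=v)$ with $x_{i,p,v}$; (CCX) (a) for every $i\in[N]$, $\tau\in\mathcal T_a$, $(p,v)\in\tau$: $c^i_\tau\rightarrow(c^{i-1}_\tau\vee x_{i,p,v})$; (b) for every $\tau\in\mathcal T_a$: the unit clause $c^N_\tau$; (c) for every $\tau\in\mathcal T_a$: $c^N_\tau\rightarrow\neg c^0_\tau$; (BSU) for every $i\in\{lb+2,\dots,N-1\}$: $u_{i+1}\rightarrow u_i$; (CCU) for every $i\in\{lb+2,\dots,N\}$, $\tau\in\mathcal T_a$: $\neg c^{i-1}_\tau\rightarrow u_i$. Soft clauses: $(\neg u_i,1)$ for every $i\in\{lb+2,\dots,N\}$. *)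

From mathcomp Require Import all_boot.
Set Implicit Arguments. Unset Strict Implicit. Unset Printing Implicit Defensive.

Inductive form (X : Type) : Type :=
| FTrue | FFalse
| FVar of X
| FNot of form X
| FAnd of form X & form X
| FOr of form X & form X
| FImp of form X & form X.
Arguments FTrue {X}. Arguments FFalse {X}.

Fixpoint eval (X : Type) (v : X -> bool) (f : form X) : bool :=
  match f with
  | FTrue => true
  | FFalse => false
  | FVar x => v x
  | FNot g => ~~ eval v g
  | FAnd g h => eval v g && eval v h
  | FOr g h => eval v g || eval v h
  | FImp g h => eval v g ==> eval v h
  end.

Fixpoint fmap (X Y : Type) (s : X -> Y) (f : form X) : form Y :=
  match f with
  | FTrue => FTrue
  | FFalse => FFalse
  | FVar x => FVar (s x)
  | FNot g => FNot (fmap s g)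
  | FAnd g h => FAnd (fmap s g) (fmap s h)
  | FOr g h => FOr (fmap s g) (fmap s h)
  | FImp g h => FImp (fmap s g) (fmap s h)
  end.

Definition bigOr (X : Type) (s : seq (form X)) : form X := foldr (@FOr X) FFalse s.
Definition bigAnd (X : Type) (s : seq (form X)) : form X := foldr (@FAnd X) FTrue s.

Definition exactly_one (X : eqType) (xs : seq X) : form X :=
  bigOr [seq FAnd (FVar x) (bigAnd [seq FNot (FVar y) | y <- xs & y != x]) | x <- xs].

Record pmsat (X : finType) := PMSat {
  hard : seq (form X);
  soft : seq (form X * nat)
}.

Definition sat_hard (X : finType) (I : pmsat X) (a : {ffun X -> bool}) : bool :=
  all (eval a) (hard I).

Definition cost (X : finType) (I : pmsat X) (a : {ffun X -> bool}) : nat :=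
  \sum_(s <- soft I | ~~ eval a s.1) s.2.

(* optimal cost; None stands for infinity (hard constraints unsatisfiable) *)
Definition opt_cost (X : finType) (I : pmsat X) : option nat :=
  match [pick a | sat_hard I a] with
  | Some a0 => Some (cost I [arg min_(a < a0 | sat_hard I a) cost I a])
  | None => None
  end.

(* SUT models <P, phi>: P a finite type of parameters, D p the finite
   domain of p, atoms (p = v) are the pairs {p : P & D p}.              *)
Section SUT.
Variables (P : finType) (D : P -> finType).

Definition atom := {p : P & D p}.
Definition assignment := {dffun forall p : P, D p}.

Definition assigns (A : assignment) (a : atom) : bool := a == Tagged D (A (tag a)).

Definition is_test (phi : form atom) (A : assignment) : bool := eval (assigns A) phi.

Definition is_ttuple (t : nat) (tau : {set atom}) : bool :=
  (#|tau| == t) && [forall a in tau, forall b in tau, (tag a == tag b) ==> (a == b)].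

Definition covers (A : assignment) (tau : {set atom}) : bool :=
  [forall a in tau, assigns A a].

Definition allowed (phi : form atom) (t : nat) (tau : {set atom}) : bool :=
  is_ttuple t tau && [exists A, is_test phi A && covers A tau].

Definition hasCA (phi : form atom) (t N : nat) : bool :=
  [exists C : {ffun 'I_N -> assignment},
    [forall i, is_test phi (C i)] &&
    [forall tau : {set atom}, allowed phi t tau ==> [exists i, covers (C i) tau]]].

Lemma hasCA_exists (phi : form atom) (t : nat) : exists N, hasCA phi t N.
Proof.
pose AS := [set tau | allowed phi t tau].
exists #|AS|.
case: (pickP (is_test phi)) => [A0 HA0|Hno].
- apply/existsP.
  exists [ffun i => odflt A0 [pick A | is_test phi A && covers A (enum_val i)]].
  apply/andP; split.
  + apply/forallP=> i; rewrite ffunE.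
    by case: pickP => [A /andP[]|] //=.
  + apply/forallP=> tau; apply/implyP=> Ht.
    have HtA : tau \in AS by rewrite inE.
    apply/existsP; exists (enum_rank_in HtA tau); rewrite ffunE enum_rankK_in //.
    case: pickP => [A /andP[] //|Hn] /=.
    move: Ht => /andP[_ /existsP[A HA]]; by move: (Hn A); rewrite HA.
- have -> : #|AS| = 0.
    apply/eqP; rewrite cards_eq0; apply/eqP/setP=> tau; rewrite !inE.
    apply/negbTE/negP=> /andP[_ /existsP[A /andP[HA _]]].
    by move: (Hno A); rewrite HA.
  apply/existsP; exists (ffun0 (card_ord 0)).
  apply/andP; split; first by apply/forallP=> -[].
  apply/forallP=> tau; apply/implyP=> Ht.
  by move: Ht => /andP[_ /existsP[A /andP[HA _]]]; move: (Hno A); rewrite HA.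
Qed.

Definition CAN (phi : form atom) (t : nat) : nat := ex_minn (hasCA_exists phi t).

End SUT.

Section CCX.
Variables (P : finType) (D : P -> finType) (phi : form (atom D)) (t N lb : nat).

Definition Ta : finType := {tau : {set atom D} | allowed phi t tau}.

(* ambient variable type; indices range over 'I_N.+1 = {0,...,N}:
   inl (inl (i, (p,v))) = x_{i,p,v}   (only used for 1 <= i <= N)
   inl (inr (i, tau))   = c^i_tau     (0 <= i <= N)
   inr i                = u_i         (only used for lb+2 <= i <= N) *)
Definition ccx_var : finType :=
  ((('I_N.+1 * atom D) + ('I_N.+1 * Ta)) + 'I_N.+1)%type.

Definition xv (i : 'I_N.+1) (a : atom D) : form ccx_var := FVar (inl (inl (i, a))).
Definition cv (i : 'I_N.+1) (tau : Ta) : form ccx_var := FVar (inl (inr (i, tau))).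
Definition uv (i : 'I_N.+1) : form ccx_var := FVar (inr i).

Definition rows : seq 'I_N.+1 := [seq i : 'I_N.+1 <- enum 'I_N.+1 | 0 < i].
Definition prev (i : 'I_N.+1) : 'I_N.+1 := inord i.-1.
Definition urange : seq 'I_N.+1 := [seq i : 'I_N.+1 <- enum 'I_N.+1 | lb.+2 <= i].

Definition hard_X : seq (form ccx_var) :=
  [seq exactly_one [seq inl (inl (i, Tagged D v)) : ccx_var | v <- enum (D p)]
  | i <- rows, p <- enum P].

Definition hard_SUTX : seq (form ccx_var) :=
  [seq fmap (fun a => inl (inl (i, a)) : ccx_var) phi | i <- rows].

Definition hard_CCXa : seq (form ccx_var) :=
  flatten [seq [seq FImp (cv i tau) (FOr (cv (prev i) tau) (xv i a)) | a <- enum (val tau)]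
          | i <- rows, tau <- enum Ta].

Definition hard_CCXb : seq (form ccx_var) := [seq cv ord_max tau | tau <- enum Ta].

Definition hard_CCXc : seq (form ccx_var) :=
  [seq FImp (cv ord_max tau) (FNot (cv ord0 tau)) | tau <- enum Ta].

Definition hard_BSU : seq (form ccx_var) :=
  [seq FImp (uv (inord i.+1)) (uv i) | i : 'I_N.+1 <- urange & i < N].

Definition hard_CCU : seq (form ccx_var) :=
  [seq FImp (FNot (cv (prev i) tau)) (uv i) | i <- urange, tau <- enum Ta].

Definition pmsat_ccx : pmsat ccx_var :=
  {| hard := hard_X ++ hard_SUTX ++ hard_CCXa ++ hard_CCXb ++ hard_CCXc
             ++ hard_BSU ++ hard_CCU;
     soft := [seq (FNot (uv i), 1) | i <- urange] |}.

End CCX.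

From Pilot Require Import Defs.
From mathcomp Require Import all_boot zify.
Set Implicit Arguments. Unset Strict Implicit. Unset Printing Implicit Defensive.

(* A satisfying assignment of the hard constraints is read as N rows, which are
   test cases by (X) and (SUTX), and c^i_tau as "tau is covered by one of the
   rows 1..i": by (CCXa) a true c^i_tau stays true at i-1 unless row i covers
   tau, and (CCXc) forbids it to reach 0. Hence if every c^i_tau holds, rows
   1..i form a covering array and CAN <= i. By (CCXb) this gives CAN <= N, and
   by (CCU) every u_i with lb+2 <= i <= CAN must be true, so the cost is at
   least CAN - (lb+1). Conversely, an optimal covering array padded to N rows,
   with c^i_tau := "covered by the first i rows" and u_i := (i <= CAN),
   satisfies all hard constraints at exactly that cost. *)

Lemma eval_ext (X : Type) (v w : X -> bool) (f : form X) :
  v =1 w -> eval v f = eval w f.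
Proof. by move=> vw; elim: f => //= [g ->|g -> h ->|g -> h ->|g -> h ->]. Qed.

Lemma eval_fmap (X Y : Type) (s : X -> Y) (v : Y -> bool) (f : form X) :
  eval v (fmap s f) = eval (v \o s) f.
Proof. by elim: f => //= [g ->|g -> h ->|g -> h ->|g -> h ->]. Qed.

Lemma eval_bigOr (X : Type) (v : X -> bool) (s : seq (form X)) :
  eval v (bigOr s) = has (eval v) s.
Proof. by elim: s => //= f s ->. Qed.

Lemma eval_bigAnd (X : Type) (v : X -> bool) (s : seq (form X)) :
  eval v (bigAnd s) = all (eval v) s.
Proof. by elim: s => //= f s ->. Qed.

Lemma exactly_oneP (X : eqType) (v : X -> bool) (xs : seq X) :
  reflect (exists2 x, x \in xs & {in xs, v =1 pred1 x}) (eval v (exactly_one xs)).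
Proof.
rewrite /exactly_one eval_bigOr has_map.
apply: (iffP hasP) => [[x xs_x] /=|[x xs_x vx]].
  rewrite eval_bigAnd all_map => /andP[vx /allP others].
  exists x => // y xs_y /=; have [->|yx] := eqVneq y x; first exact: vx.
  by apply/negbTE/others; rewrite mem_filter yx.
exists x => //=; rewrite eval_bigAnd all_map (vx x xs_x) /= eqxx /=.
by apply/allP => y; rewrite mem_filter => /andP[yx xs_y] /=; rewrite vx // (negbTE yx).
Qed.

Lemma all_flatten (T : Type) (p : pred T) (ss : seq (seq T)) :
  all p (flatten ss) = all (all p) ss.
Proof. by elim: ss => //= s ss IH; rewrite all_cat IH. Qed.

Lemma count_iota_between (m n k : nat) :
  count (fun i => m <= i <= n) (iota 0 k) = minn n.+1 k - m.
Proof.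
elim: k => [|k IH]; first by rewrite minn0.
rewrite -addn1 iotaD count_cat IH /= add0n addn0; lia.
Qed.

Lemma chain_witness (c x : nat -> bool) (n : nat) :
  ~~ c 0 -> (forall i, 0 < i <= n -> c i -> c i.-1 || x i) ->
  c n -> exists2 j, 0 < j <= n & x j.
Proof.
move=> c0; elim: n => [|n IH] step cn; first by rewrite cn in c0.
have /orP[cn'|xn] := step n.+1 (leqnn _) cn; last by exists n.+1; rewrite ?leqnn.
have [|j /andP[j_gt0 j_le] xj] := IH _ cn'.
  by move=> i /andP[i_gt0 i_le]; apply: step; rewrite i_gt0 leqW.
by exists j; rewrite // j_gt0 leqW.
Qed.

Lemma opt_costE_Some (X : finType) (I : pmsat X) (a : {ffun X -> bool}) (m : nat) :
  sat_hard I a -> cost I a = m -> (forall b, sat_hard I b -> m <= cost I b) ->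
  opt_cost I = Some m.
Proof.
move=> Ia <- cost_min; rewrite /opt_cost; case: pickP => [a0 Ia0|/(_ a)]; last by rewrite Ia.
case: arg_minnP => // b Ib b_min; congr Some.
by apply/eqP; rewrite eqn_leq b_min // cost_min.
Qed.

Lemma opt_costE_None (X : finType) (I : pmsat X) :
  (forall a, ~~ sat_hard I a) -> opt_cost I = None.
Proof. by move=> unsat; rewrite /opt_cost; case: pickP => // a; rewrite (negbTE (unsat a)). Qed.

Section CoveringArrays.
Variables (P : finType) (D : P -> finType) (phi : form (atom D)) (t : nat).

Lemma hasCAP (m : nat) :
  reflect (exists2 C : {ffun 'I_m -> assignment D}, forall i, is_test phi (C i)
             & forall tau, allowed phi t tau -> exists i, covers (C i) tau)
          (hasCA phi t m).
Proof.
apply: (iffP existsP) => [[C /andP[/forallP C_test /forallP C_cov]]|[C C_test C_cov]].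
  by exists C => // tau /(implyP (C_cov tau)) /existsP.
exists C; apply/andP; split; apply/forallP => // tau.
by apply/implyP => /C_cov /existsP.
Qed.

Lemma CAN_min (m : nat) : hasCA phi t m -> CAN phi t <= m.
Proof. by rewrite /CAN; case: ex_minnP => K _; apply. Qed.

Lemma hasCA_CAN : hasCA phi t (CAN phi t).
Proof. by rewrite /CAN; case: ex_minnP. Qed.

End CoveringArrays.

Section CCX.
Variables (P : finType) (D : P -> finType) (phi : form (atom D)) (t N lb : nat).
Local Notation V := (ccx_var phi t N).
Local Notation I := (pmsat_ccx phi t N lb).
Local Notation K := (CAN phi t).

Definition xvar (i : 'I_N.+1) (x : atom D) : V := inl (inl (i, x)).
Definition cvar (i : 'I_N.+1) (tau : Ta phi t) : V := inl (inr (i, tau)).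
Definition uvar (i : 'I_N.+1) : V := inr i.

Lemma xvar_inj (i : 'I_N.+1) : injective (xvar i).
Proof. by move=> x y []. Qed.

Lemma mem_rows (i : 'I_N.+1) : (i \in rows N) = (0 < i).
Proof. by rewrite mem_filter mem_enum andbT. Qed.

Lemma mem_urange (i : 'I_N.+1) : (i \in urange N lb) = (lb.+2 <= i).
Proof. by rewrite mem_filter mem_enum andbT. Qed.

Lemma prevE (i : 'I_N.+1) : Defs.prev i = i.-1 :> nat.
Proof. by rewrite inordK // (leq_ltn_trans (leq_pred i)). Qed.

Lemma sat_hard_ccx (a : {ffun V -> bool}) :
  sat_hard I a =
  [&& all (eval a) (hard_X phi t N), all (eval a) (hard_SUTX phi t N),
      all (eval a) (hard_CCXa phi t N), all (eval a) (hard_CCXb phi t N),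
      all (eval a) (hard_CCXc phi t N), all (eval a) (hard_BSU phi t N lb)
    & all (eval a) (hard_CCU phi t N lb)].
Proof. by rewrite /sat_hard /= !all_cat. Qed.

Lemma cost_ccx (a : {ffun V -> bool}) :
  cost I a = count (fun i => a (uvar i)) (urange N lb).
Proof. by rewrite /cost big_map -sum1_count; apply: eq_bigl => i /=; rewrite negbK. Qed.

Lemma count_urange_le (k : nat) : k <= N ->
  count (fun i : 'I_N.+1 => i <= k) (urange N lb) = k - lb.+1.
Proof.
move=> k_le_N; rewrite count_filter.
transitivity (count (fun n => lb.+2 <= n <= k) (map val (enum 'I_N.+1))).
  by rewrite count_map; apply: eq_count => i /=; rewrite andbC.
by rewrite val_enum_ord count_iota_between (minn_idPl _).
Qed.

Section Decode.
Variables (a : {ffun V -> bool}) (A0 : assignment D).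
Hypothesis a_sat : sat_hard I a.

Lemma sat_X (i : 'I_N.+1) (p : P) : 0 < i ->
  eval a (exactly_one [seq xvar i (Tagged D v) | v <- enum (D p)]).
Proof.
move: a_sat; rewrite sat_hard_ccx => /and5P[+ _ _ _ _] i_gt0.
by move/all_allpairsP; apply; rewrite ?mem_rows ?mem_enum.
Qed.

Lemma sat_SUTX (i : 'I_N.+1) : 0 < i -> eval a (fmap (xvar i) phi).
Proof.
move: a_sat; rewrite sat_hard_ccx => /and5P[_ + _ _ _] i_gt0.
by rewrite all_map => /allP; apply; rewrite mem_rows.
Qed.

Lemma sat_CCXa (i : 'I_N.+1) (tau : Ta phi t) (x : atom D) :
  0 < i -> x \in val tau -> a (cvar i tau) -> a (cvar (Defs.prev i) tau) || a (xvar i x).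
Proof.
move: a_sat; rewrite sat_hard_ccx => /and5P[_ _ + _ _] i_gt0 tau_x.
rewrite /hard_CCXa all_flatten => /all_allpairsP /(_ i tau).
rewrite mem_rows mem_enum all_map => /(_ i_gt0 isT) /allP /(_ x).
by rewrite mem_enum => /(_ tau_x) /implyP.
Qed.

Lemma sat_CCXb (tau : Ta phi t) : a (cvar ord_max tau).
Proof.
move: a_sat; rewrite sat_hard_ccx => /and5P[_ _ _ + _].
by rewrite all_map => /allP /(_ tau (mem_enum _ _)).
Qed.

Lemma sat_CCXc (tau : Ta phi t) : ~~ a (cvar ord0 tau).
Proof.
move: a_sat; rewrite sat_hard_ccx => /and5P[_ _ _ _ /andP[+ _]].
by rewrite all_map => /allP /(_ tau (mem_enum _ _)) /=; rewrite sat_CCXb.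
Qed.

Lemma sat_CCU (i : 'I_N.+1) (tau : Ta phi t) :
  lb.+2 <= i -> ~~ a (cvar (Defs.prev i) tau) -> a (uvar i).
Proof.
move: a_sat; rewrite sat_hard_ccx => /and5P[_ _ _ _ /and3P[_ _ +]] i_ge.
move/all_allpairsP => /(_ i tau); rewrite mem_urange mem_enum => /(_ i_ge isT) /=.
by move=> /implyP.
Qed.

(* [A0] is only a default value: by (X) the [pick] always succeeds. *)
Definition decode_row (i : 'I_N.+1) : assignment D :=
  [ffun p : P => odflt (A0 p) [pick v : D p | a (xvar i (Tagged D v))]].

Lemma decode_row_assigns (i : 'I_N.+1) (x : atom D) :
  0 < i -> assigns (decode_row i) x = a (xvar i x).
Proof.
move=> i_gt0; case: x => p v; rewrite /assigns ffunE eq_Tagged /=.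
have /exactly_oneP[_ /mapP[w _ ->] aX] := sat_X p i_gt0.
have aXw u : a (xvar i (Tagged D u)) = (u == w).
  rewrite aX; last by apply: map_f; rewrite mem_enum.
  by apply/eqP/eqP => [/xvar_inj tag_uw|->]; first exact: eq_from_Tagged tag_uw.
rewrite aXw; case: pickP => [u|none] /=; first by rewrite aXw => /eqP ->.
by move: (none w); rewrite aXw eqxx.
Qed.

Lemma decode_row_test (i : 'I_N.+1) : 0 < i -> is_test phi (decode_row i).
Proof.
move=> i_gt0; rewrite /is_test (@eval_ext _ _ (a \o xvar i)) -?eval_fmap ?sat_SUTX //.
by move=> x; rewrite decode_row_assigns.
Qed.

Lemma decode_covers (i : 'I_N.+1) (tau : Ta phi t) :
  a (cvar i tau) -> exists2 j, 0 < j <= i & covers (decode_row (inord j)) (val tau).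
Proof.
rewrite -{1}(inord_val i).
apply: (@chain_witness (fun n => a (cvar (inord n) tau))).
  have -> : inord 0 = ord0 :> 'I_N.+1 by apply: val_inj; rewrite /= inordK.
  exact: sat_CCXc.
move=> n /andP[n_gt0 n_le_i] c_n /=.
have n_val : (inord n : 'I_N.+1) = n :> nat by rewrite inordK // (leq_ltn_trans n_le_i).
apply/orP; have [c_prev|not_c_prev] := boolP (a (cvar (inord n.-1) tau)); [by left|right].
apply/forallP => x; apply/implyP => tau_x; rewrite decode_row_assigns ?n_val //.
by have := sat_CCXa _ tau_x c_n; rewrite /Defs.prev n_val (negbTE not_c_prev); apply.
Qed.

Lemma hasCA_decode (i : 'I_N.+1) : (forall tau, a (cvar i tau)) -> hasCA phi t i.
Proof.
move=> c_i; apply/hasCAP; exists [ffun j : 'I_i => decode_row (inord j.+1)].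
  move=> j; rewrite ffunE; apply: decode_row_test.
  by rewrite inordK // (leq_ltn_trans (ltn_ord j) (ltn_ord i)).
move=> tau allowed_tau.
have [j /andP[j_gt0 j_le_i] cov] := decode_covers (c_i (Sub tau allowed_tau)).
have j_lt_i : j.-1 < i by rewrite prednK.
by exists (Ordinal j_lt_i); rewrite ffunE /= prednK.
Qed.

Lemma sat_CAN_le_N : K <= N.
Proof. exact: CAN_min (hasCA_decode sat_CCXb). Qed.

Lemma sat_u (i : 'I_N.+1) : lb.+2 <= i -> i <= K -> a (uvar i).
Proof.
move=> i_ge i_le_K; apply/contraT => not_u.
have c_prev tau : a (cvar (Defs.prev i) tau) by apply: contraNT not_u; exact: sat_CCU.
by have := leq_trans i_le_K (CAN_min (hasCA_decode c_prev)); rewrite prevE; lia.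
Qed.

Lemma sat_cost_ge : K - lb.+1 <= cost I a.
Proof.
rewrite cost_ccx -(count_urange_le sat_CAN_le_N) !count_filter.
by apply: sub_count => i /= /andP[/andP[i_le_K i_ge] ->]; rewrite i_ge sat_u.
Qed.

End Decode.

Section Encode.
Variables (k : nat) (C : {ffun 'I_k -> assignment D}).
Hypothesis C_test : forall j, is_test phi (C j).
Hypothesis C_cov : forall tau, allowed phi t tau -> exists j, covers (C j) tau.
Hypotheses (k_gt0 : 0 < k) (k_le_N : k <= N).

(* Row i is C_(i-1); the unused row 0 and the padding rows beyond k default to C_0. *)
Definition encode_row (i : nat) : assignment D := C (insubd (Ordinal k_gt0) i.-1).

Definition covered_upto (i : nat) (tau : {set atom D}) : bool :=
  [exists j : 'I_N.+1, (0 < j <= i) && covers (encode_row j) tau].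

Definition encode : {ffun V -> bool} := [ffun v : V =>
  match v with
  | inl (inl (i, x)) => assigns (encode_row i) x
  | inl (inr (i, tau)) => covered_upto i (val tau)
  | inr i => i <= k
  end].

Lemma covered_upto0 (tau : {set atom D}) : covered_upto 0 tau = false.
Proof. by apply/existsP => -[j /andP[/andP[j_gt0 j_le0] _]]; rewrite leqNgt j_gt0 in j_le0. Qed.

Lemma covered_upto_le (i i' : nat) (tau : {set atom D}) :
  i <= i' -> covered_upto i tau -> covered_upto i' tau.
Proof.
move=> i_le /existsP[j /andP[/andP[j_gt0 j_le] cov]].
by apply/existsP; exists j; rewrite j_gt0 cov (leq_trans j_le i_le).
Qed.

Lemma covered_upto_k (tau : {set atom D}) : allowed phi t tau -> covered_upto k tau.
Proof.
move=> /C_cov[j cov]; have j_lt : j.+1 < N.+1 by rewrite ltnS (leq_trans (ltn_ord j)).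
by apply/existsP; exists (Ordinal j_lt); rewrite /= ltn_ord /encode_row /= valKd.
Qed.

Lemma covered_upto_pred (i : nat) (tau : {set atom D}) :
  covered_upto i tau -> covered_upto i.-1 tau || covers (encode_row i) tau.
Proof.
move=> /existsP[j /andP[/andP[j_gt0 j_le] cov]].
have [j_lt|j_ge] := ltnP j i.
  apply/orP; left; apply/existsP; exists j.
  by rewrite j_gt0 cov -ltnS prednK // (leq_trans _ j_lt).
have -> : i = j by apply/eqP; rewrite eqn_leq j_ge j_le.
by rewrite cov orbT.
Qed.

Lemma encode_sat : sat_hard I encode.
Proof.
rewrite sat_hard_ccx; apply/and5P; split; [| | | | apply/and3P; split].
- apply/all_allpairsP => i p _ _; apply/exactly_oneP.
  exists (xvar i (Tagged D (encode_row i p))); first by apply: map_f; rewrite mem_enum.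
  move=> _ /mapP[v _ ->]; rewrite ffunE /= /assigns /=.
  by apply/eqP/eqP => [->|/xvar_inj].
- rewrite all_map; apply/allP => i _ /=; rewrite eval_fmap.
  rewrite (@eval_ext _ _ (assigns (encode_row i))); first exact: C_test.
  by move=> x; rewrite /= ffunE.
- rewrite all_flatten; apply/all_allpairsP => i tau i_gt0 _; rewrite all_map.
  apply/allP => x tau_x /=; rewrite !ffunE /= prevE; apply/implyP => /covered_upto_pred.
  rewrite mem_enum in tau_x.
  by case/orP=> [-> //|/forallP/(_ x)/implyP/(_ tau_x) ->]; rewrite orbT.
- rewrite all_map; apply/allP => tau _ /=; rewrite ffunE /=.
  exact: covered_upto_le k_le_N (covered_upto_k (valP tau)).
- rewrite all_map; apply/allP => tau _ /=; rewrite !ffunE /=.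
  by rewrite covered_upto0 implybT.
- rewrite all_map; apply/allP => i; rewrite mem_filter => /andP[i_lt_N _] /=.
  by rewrite !ffunE /= inordK //; apply/implyP; exact: ltnW.
- apply/all_allpairsP => i tau _ _ /=; rewrite !ffunE /= prevE.
  apply/implyP; apply: contraNT; rewrite -ltnNge => k_lt_i.
  by apply: covered_upto_le (covered_upto_k (valP tau)); lia.
Qed.

Lemma encode_cost : cost I encode = k - lb.+1.
Proof. by rewrite cost_ccx -(count_urange_le k_le_N); apply: eq_count => i; rewrite ffunE. Qed.

End Encode.
End CCX.

Theorem proposition4 (P : finType) (D : P -> finType) (phi : form (atom D))
    (t N lb : nat) :
  (forall p : P, 0 < #|D p|) ->
  (exists A : assignment D, is_test phi A) ->
  1 <= t <= #|P| ->
  1 <= N ->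
  lb < CAN phi t ->
  opt_cost (pmsat_ccx phi t N lb) =
    if CAN phi t <= N then Some (CAN phi t - lb.+1) else None.
Proof.
move=> _ [A0 _] _ _ lb_lt_CAN.
have /hasCAP[C C_test C_cov] := hasCA_CAN phi t.
have CAN_gt0 : 0 < CAN phi t := leq_ltn_trans (leq0n lb) lb_lt_CAN.
case: leqP => [CAN_le_N|N_lt_CAN].
  apply: opt_costE_Some (encode_sat lb C_test C_cov CAN_gt0 CAN_le_N) _ _.
    exact: encode_cost.
  by move=> a a_sat; exact: sat_cost_ge A0 a_sat.
apply: opt_costE_None => a; apply/negP => a_sat.
by rewrite ltnNge (sat_CAN_le_N A0 a_sat) in N_lt_CAN.
Qed.
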